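(* Let $\rho>0$, $\xi\in\mathbb{R}$, and $H_0=\frac{1}{2(1+\rho r^2)}\big(P_r^2+\frac{P_\phi^2}{r^2}+\xi r^2\big)$ on $(r,\phi)\in(0,\infty)\times\mathbb{S}^1$. Consider trajectories of the Hamiltonian flow on a level set $H_0=E$, $P_\phi=L>0$, with $\phi$ normalized (by a rotation) so that $\phi=0$ at a point where $r$ is minimal. Put $$e=\sqrt{1+\frac{L^2}{E^2}(2\rho E-\xi)},\qquad E_\pm=L^2\big(-\rho\pm\sqrt{\rho^2+\xi/L^2}\big).$$ (a) If $E\ge\xi/(2\rho)$: for $E=0$ the trajectories are $\frac{L}{r^2}=\sqrt{|\xi|}\cos(2\phi)$, and for $E\ne0$ they are $\frac{L^2}{|E|r^2}=\mathrm{sign}(E)+e\cos(2\phi)$. (b) If $E_+<E<\xi/(2\rho)$: the trajectories are $\frac{L^2}{Er^2}=1+e\cos(2\phi)$; in this case they are closed. *)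

From Stdlib Require Export Reals.
Open Scope R_scope.

Definition H0 (rho xi : R) (r phi Pr Pphi : R) : R :=
  (Pr ^ 2 + Pphi ^ 2 / r ^ 2 + xi * r ^ 2) / (2 * (1 + rho * r ^ 2)).

(* A (global-in-time) trajectory of the Hamiltonian flow of H on (0,oo) x S^1,
   with phi lifted to R. *)
Definition hamiltonian_trajectory (H : R -> R -> R -> R -> R)
  (r phi Pr Pphi : R -> R) : Prop :=
  forall t : R, 0 < r t /\
    exists dr dphi dPr dPphi : R,
      derivable_pt_lim r t dr /\
      derivable_pt_lim phi t dphi /\
      derivable_pt_lim Pr t dPr /\
      derivable_pt_lim Pphi t dPphi /\
      derivable_pt_lim (fun p => H (r t) (phi t) p (Pphi t)) (Pr t) dr /\
      derivable_pt_lim (fun p => H (r t) (phi t) (Pr t) p) (Pphi t) dphi /\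
      derivable_pt_lim (fun x => H x (phi t) (Pr t) (Pphi t)) (r t) (- dPr) /\
      derivable_pt_lim (fun y => H (r t) y (Pr t) (Pphi t)) (phi t) (- dPphi).

Definition sgn (x : R) : R := if Rlt_dec 0 x then 1 else if Rlt_dec x 0 then -1 else 0.

Definition ecc (rho xi E L : R) : R :=
  sqrt (1 + L ^ 2 / E ^ 2 * (2 * rho * E - xi)).

Definition Eplus (rho xi L : R) : R :=
  L ^ 2 * (- rho + sqrt (rho ^ 2 + xi / L ^ 2)).

From Pilot Require Import Defs.
From Stdlib Require Import Reals Lra Psatz.
From Coquelicot Require Coquelicot.
Open Scope R_scope.

(* With u = L^2/r^2, Hamilton's equations say that the point (u - E, L P_r / r)
   rotates rigidly by the angle 2 phi, and conservation of energy fixes the radius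
   of the circle to sqrt (E^2 + L^2 (2 rho E - xi)).  At the point of minimal r we
   have P_r = 0 and phi = 0, whence L^2/r^2 = E + sqrt (...) cos (2 phi): dividing
   by |E| gives both orbit equations.  When 2 rho E < xi the amplitude sqrt (...)
   is smaller than E, so phi' is a positive 2 pi-periodic function of phi alone;
   phi then gains 2 pi over a fixed time, after which the motion repeats. *)

(* Coquelicot is imported only inside this module: its AutoDerive part exports a
   constructor [Eplus] that would shadow [Defs.Eplus] in the theorem below. *)
Module CentralOrbits.

Import Coquelicot.Coquelicot.

(* auto_derive leaves eta-expanded [Derive (fun x => g x) t]: match it up to conversion. *)
Ltac rewrite_Derive D :=
  match type of D with is_derive _ ?t ?l =>
    match goal with |- context [Derive ?f t] => rewrite (is_derive_unique f t l D) end
  end.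

Lemma is_derive_zero_const (f : R -> R) :
  (forall t, is_derive f t 0) -> forall a b, f a = f b.
Proof.
  intros Df a b.
  destruct (Rtotal_order a b) as [Hab | [-> | Hab]]; [| reflexivity |].
  - apply eq_is_derive; [intros; apply Df | exact Hab].
  - symmetry; apply eq_is_derive; [intros; apply Df | exact Hab].
Qed.

Lemma rotation_ode_solution (X Y theta omega : R -> R) (t0 : R) :
  (forall t, is_derive X t (- omega t * Y t)) ->
  (forall t, is_derive Y t (omega t * X t)) ->
  (forall t, is_derive theta t (omega t)) ->
  theta t0 = 0 -> Y t0 = 0 ->
  forall t, X t = X t0 * cos (theta t) /\ Y t = X t0 * sin (theta t).
Proof.
  intros DX DY Dth Hth0 HY0 t.
  assert (Drot : forall u,
    is_derive (fun s => X s * cos (theta s) + Y s * sin (theta s)) u 0 /\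
    is_derive (fun s => X s * sin (theta s) - Y s * cos (theta s)) u 0).
  { intros u. split; auto_derive; try (repeat split; eexists; eauto);
      rewrite_Derive (DX u); rewrite_Derive (DY u); rewrite_Derive (Dth u); ring. }
  pose proof (is_derive_zero_const _ (fun u => proj1 (Drot u)) t t0) as Hc.
  pose proof (is_derive_zero_const _ (fun u => proj2 (Drot u)) t t0) as Hs.
  simpl in Hc, Hs. rewrite Hth0, HY0, cos_0, sin_0 in Hc, Hs.
  pose proof (sin2_cos2 (theta t)) as Hpyth; unfold Rsqr in Hpyth.
  split.
  - transitivity ((X t * cos (theta t) + Y t * sin (theta t)) * cos (theta t)
      + (X t * sin (theta t) - Y t * cos (theta t)) * sin (theta t)).
    + transitivity (X t * (sin (theta t) * sin (theta t) + cos (theta t) * cos (theta t)));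
        [rewrite Hpyth |]; ring.
    + rewrite Hc, Hs; ring.
  - transitivity ((X t * cos (theta t) + Y t * sin (theta t)) * sin (theta t)
      - (X t * sin (theta t) - Y t * cos (theta t)) * cos (theta t)).
    + transitivity (Y t * (sin (theta t) * sin (theta t) + cos (theta t) * cos (theta t)));
        [rewrite Hpyth |]; ring.
    + rewrite Hc, Hs; ring.
Qed.

Lemma angle_period_of_periodic_speed (f phi : R -> R) (p : R) :
  0 < p -> (forall x, 0 < f x) -> (forall x, continuous f x) ->
  (forall x, f (x + p) = f x) ->
  (forall t, is_derive phi t (f (phi t))) ->
  exists T, 0 < T /\ forall t, phi (t + T) = phi t + p.
Proof.
  intros Hp fpos fcont fper Dphi.
  set (G x := RInt (fun y => / f y) 0 x).
  assert (DG : forall x, is_derive G x (/ f x)).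
  { intros x. apply (is_derive_RInt (fun y => / f y) G 0 x).
    - apply filter_forall; intros y. apply (RInt_correct (V := R_CompleteNormedModule)),
        (ex_RInt_continuous (V := R_CompleteNormedModule)).
      intros z _. apply continuous_Rinv_comp; [apply fcont | apply Rgt_not_eq, fpos].
    - apply continuous_Rinv_comp; [apply fcont | apply Rgt_not_eq, fpos]. }
  assert (G_incr : forall x y, x < y -> G x < G y).
  { intros x y Hxy. apply (incr_function G m_infty p_infty (fun x => / f x)); simpl; auto.
    intros z _ _. apply Rinv_0_lt_compat, fpos. }
  assert (G_inj : forall x y, G x = G y -> x = y).
  { intros x y Hxy. destruct (Rtotal_order x y) as [h | [h | h]]; auto;
      apply G_incr in h; lra. }
  assert (Hflow : forall a b, G (phi b) - b = G (phi a) - a).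
  { intros a b. apply (is_derive_zero_const (fun t => G (phi t) - t)). intros t.
    replace 0 with (f (phi t) * / f (phi t) - 1) by (field; apply Rgt_not_eq, fpos).
    apply (is_derive_minus (fun t => G (phi t)) (fun t => t)).
    - apply (is_derive_comp G phi); [apply DG | apply Dphi].
    - apply (is_derive_id (K := R_AbsRing)). }
  assert (Hshift : forall a b, G (b + p) - G b = G (a + p) - G a).
  { intros a b. apply (is_derive_zero_const (fun x => G (x + p) - G x)). intros x.
    replace 0 with (1 * / f (x + p) - / f x) by (rewrite fper; ring).
    apply (is_derive_minus (fun x => G (x + p)) G); [| apply DG].
    apply (is_derive_comp G (fun x => x + p)); [apply DG |].
    auto_derive; auto; ring. }
  exists (G p - G 0). split.
  { apply Rlt_0_minus, G_incr, Hp. }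
  intros t. apply G_inj.
  pose proof (Hflow t (t + (G p - G 0))) as H1.
  pose proof (Hshift 0 (phi t)) as H2. rewrite Rplus_0_l in H2. lra.
Qed.

Lemma H0_derive_Pr (rho xi r phi p q : R) : 0 < r -> 0 < rho ->
  derivable_pt_lim (fun p => H0 rho xi r phi p q) p (p / (1 + rho * r ^ 2)).
Proof.
  intros Hr Hrho. apply is_derive_Reals. unfold H0.
  auto_derive; [nra |]. field. nra.
Qed.

Lemma H0_derive_Pphi (rho xi r phi p q : R) : 0 < r -> 0 < rho ->
  derivable_pt_lim (fun q => H0 rho xi r phi p q) q (q / (r ^ 2 * (1 + rho * r ^ 2))).
Proof.
  intros Hr Hrho. apply is_derive_Reals. unfold H0.
  auto_derive; [split; nra |]. field. split; nra.
Qed.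

Lemma H0_derive_r (rho xi r phi p q : R) : 0 < r -> 0 < rho ->
  derivable_pt_lim (fun r => H0 rho xi r phi p q) r
    (((- 2 * q ^ 2 / r ^ 3 + 2 * xi * r) * (2 * (1 + rho * r ^ 2))
      - (p ^ 2 + q ^ 2 / r ^ 2 + xi * r ^ 2) * (4 * rho * r))
     / (2 * (1 + rho * r ^ 2)) ^ 2).
Proof.
  intros Hr Hrho. apply is_derive_Reals. unfold H0.
  auto_derive; [repeat split; nra |]. field. split; nra.
Qed.

Definition orbit_amp2 (rho xi E L : R) : R := E ^ 2 + L ^ 2 * (2 * rho * E - xi).

Lemma ecc_eq (rho xi E L : R) : E <> 0 -> 0 <= orbit_amp2 rho xi E L ->
  ecc rho xi E L = sqrt (orbit_amp2 rho xi E L) / Rabs E.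
Proof.
  intros HE HA. unfold ecc, orbit_amp2 in *.
  assert (0 < Rabs E) by (apply Rabs_pos_lt; exact HE).
  rewrite <- (sqrt_pow2 (Rabs E)), <- sqrt_div_alt by (try apply pow_lt; lra).
  f_equal. rewrite pow2_abs. field. exact HE.
Qed.

Lemma sgn_eq (E : R) : E <> 0 -> sgn E = E / Rabs E.
Proof.
  intros HE. unfold sgn. destruct (Rlt_dec 0 E).
  - rewrite Rabs_right by lra. field. lra.
  - destruct (Rlt_dec E 0); [| lra]. rewrite Rabs_left by lra. field. lra.
Qed.

Lemma sgn_pos (E : R) : 0 < E -> sgn E = 1.
Proof. intros HE. unfold sgn. destruct (Rlt_dec 0 E); [reflexivity | lra]. Qed.

Section Trajectory.

Variables (rho xi E L : R) (r phi Pr Pphi : R -> R).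
Hypothesis rho_pos : 0 < rho.
Hypothesis L_pos : 0 < L.
Hypothesis traj : hamiltonian_trajectory (H0 rho xi) r phi Pr Pphi.
Hypothesis energy : forall t, H0 rho xi (r t) (phi t) (Pr t) (Pphi t) = E.
Hypothesis momentum : forall t, Pphi t = L.

Lemma r_pos t : 0 < r t.
Proof. exact (proj1 (traj t)). Qed.

Lemma Pr_sq t : Pr t ^ 2 = 2 * E * (1 + rho * r t ^ 2) - L ^ 2 / r t ^ 2 - xi * r t ^ 2.
Proof.
  pose proof (r_pos t). rewrite <- (energy t), momentum. unfold H0.
  field. split; nra.
Qed.

Definition angular_speed (t : R) : R := L / (r t ^ 2 * (1 + rho * r t ^ 2)).

Lemma hamilton_equations t :
  is_derive r t (Pr t / (1 + rho * r t ^ 2)) /\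
  is_derive phi t (angular_speed t) /\
  is_derive Pr t ((L ^ 2 / r t ^ 3 - (xi - 2 * E * rho) * r t) / (1 + rho * r t ^ 2)).
Proof.
  pose proof (r_pos t) as Hr.
  destruct (traj t) as [_ [dr [dphi [dPr [dPphi [Dr [Dphi [DPr [_ [HPr [HPphi [Hq _]]]]]]]]]]]].
  rewrite momentum in HPr, HPphi, Hq.
  pose proof (uniqueness_limite _ _ _ _ HPr
    (H0_derive_Pr rho xi _ (phi t) (Pr t) L Hr rho_pos)) as ->.
  pose proof (uniqueness_limite _ _ _ _ HPphi
    (H0_derive_Pphi rho xi _ (phi t) (Pr t) L Hr rho_pos)) as ->.
  pose proof (uniqueness_limite _ _ _ _ Hq
    (H0_derive_r rho xi _ (phi t) (Pr t) L Hr rho_pos)) as HdPr.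
  split; [| split]; apply is_derive_Reals; [exact Dr | exact Dphi |].
  replace (_ / _) with dPr; [exact DPr |].
  replace dPr with (- - dPr) by ring. rewrite HdPr, Pr_sq. field. split; nra.
Qed.

Definition orbit_x (t : R) : R := L ^ 2 / r t ^ 2 - E.
Definition orbit_y (t : R) : R := L * Pr t / r t.

Lemma orbit_x_derive t : is_derive orbit_x t (- (2 * angular_speed t) * orbit_y t).
Proof.
  destruct (hamilton_equations t) as [Dr _]. pose proof (r_pos t).
  unfold orbit_x. auto_derive; [repeat split; solve [eexists; eassumption | nra] |].
  rewrite_Derive Dr. unfold orbit_y, angular_speed. field. split; nra.
Qed.

Lemma orbit_y_derive t : is_derive orbit_y t (2 * angular_speed t * orbit_x t).
Proof.
  destruct (hamilton_equations t) as [Dr [_ DPr]]. pose proof (r_pos t).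
  unfold orbit_y. auto_derive; [repeat split; solve [eexists; eassumption | nra] |].
  rewrite_Derive Dr; rewrite_Derive DPr.
  assert (Hxi : xi = (2 * E * (1 + rho * r t ^ 2) - L ^ 2 / r t ^ 2 - Pr t ^ 2) / r t ^ 2).
  { rewrite (Pr_sq t). field. lra. }
  rewrite Hxi. unfold orbit_x, angular_speed. field. split; nra.
Qed.

Lemma orbit_xy_norm t : orbit_x t ^ 2 + orbit_y t ^ 2 = orbit_amp2 rho xi E L.
Proof.
  pose proof (r_pos t). unfold orbit_x, orbit_y, orbit_amp2.
  replace ((L * Pr t / r t) ^ 2) with (L ^ 2 * Pr t ^ 2 / r t ^ 2) by (field; lra).
  rewrite Pr_sq. field. lra.
Qed.

Lemma orbit_amp2_nonneg : 0 <= orbit_amp2 rho xi E L.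
Proof. rewrite <- (orbit_xy_norm 0). nra. Qed.

Lemma E_pos_of_bound : E < xi / (2 * rho) -> 0 < E.
Proof.
  intros Hlt.
  assert (Hb : 2 * rho * E < xi).
  { apply (Rmult_lt_compat_l (2 * rho)) in Hlt; [| lra].
    replace (2 * rho * (xi / (2 * rho))) with xi in Hlt by (field; lra). exact Hlt. }
  pose proof (Pr_sq 0) as HPr. pose proof (r_pos 0).
  assert (0 < L ^ 2 / r 0 ^ 2) by (apply Rdiv_lt_0_compat; nra).
  assert (xi * r 0 ^ 2 > 2 * rho * E * r 0 ^ 2) by (apply Rmult_gt_compat_r; nra).
  nra.
Qed.

Section Pericenter.

Variable t0 : R.
Hypothesis phi_t0 : phi t0 = 0.
Hypothesis r_min : forall t, r t0 <= r t.

Lemma Pr_at_min : Pr t0 = 0.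
Proof.
  destruct (hamilton_equations t0) as [Dr _]. pose proof (r_pos t0).
  pose proof (proj1 (is_derive_Reals _ _ _) Dr) as D.
  pose proof (deriv_minimum r (t0 - 1) (t0 + 1) t0 (exist _ _ D)) as Hmin; simpl in Hmin.
  assert (Pr t0 / (1 + rho * r t0 ^ 2) = 0) as Hz by (apply Hmin; intros; try apply r_min; lra).
  assert (0 < 1 + rho * r t0 ^ 2) by nra.
  apply (Rmult_eq_reg_r (/ (1 + rho * r t0 ^ 2))); [| apply Rinv_neq_0_compat; lra].
  rewrite Rmult_0_l. exact Hz.
Qed.

Lemma orbit_xy_rotation t :
  orbit_x t = orbit_x t0 * cos (2 * phi t) /\ orbit_y t = orbit_x t0 * sin (2 * phi t).
Proof.
  apply (rotation_ode_solution orbit_x orbit_y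
    (fun t => 2 * phi t) (fun t => 2 * angular_speed t) t0).
  - exact orbit_x_derive.
  - exact orbit_y_derive.
  - intros s. destruct (hamilton_equations s) as [_ [Dphi _]].
    auto_derive; [eexists; exact Dphi |]. rewrite_Derive Dphi. ring.
  - rewrite phi_t0. ring.
  - unfold orbit_y. rewrite Pr_at_min. field. apply Rgt_not_eq, r_pos.
Qed.

Lemma orbit_x_le_at_min t : orbit_x t <= orbit_x t0.
Proof.
  unfold orbit_x. pose proof (r_pos t). pose proof (r_pos t0). pose proof (r_min t).
  assert (/ r t ^ 2 <= / r t0 ^ 2) by (apply Rinv_le_contravar; [nra | apply pow_incr; lra]).
  unfold Rdiv. nra.
Qed.

(* If orbit_x t0 were negative, maximality at t0 would force cos (2 phi) = 1, hence
   orbit_y = 0 identically, contradicting orbit_y' = 2 angular_speed orbit_x < 0. *)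
Lemma orbit_x_at_min_nonneg : 0 <= orbit_x t0.
Proof.
  destruct (Rle_or_lt 0 (orbit_x t0)) as [| Hneg]; [assumption | exfalso].
  assert (y_zero : forall t, orbit_y t = 0).
  { intros t. destruct (orbit_xy_rotation t) as [Ex Ey]. pose proof (orbit_x_le_at_min t) as Hle.
    rewrite Ex in Hle. pose proof (COS_bound (2 * phi t)).
    assert (cos (2 * phi t) = 1) as Hc by nra.
    pose proof (sin2_cos2 (2 * phi t)) as Hpyth; unfold Rsqr in Hpyth; rewrite Hc in Hpyth.
    rewrite Ey. assert (sin (2 * phi t) = 0) as -> by nra. ring. }
  assert (D0 : is_derive orbit_y t0 0).
  { apply (is_derive_ext (fun _ => 0));
      [intros; rewrite y_zero; reflexivity | auto_derive; reflexivity]. }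
  pose proof (is_derive_unique _ _ _ D0) as U.
  rewrite (is_derive_unique _ _ _ (orbit_y_derive t0)) in U.
  assert (0 < angular_speed t0).
  { pose proof (r_pos t0). unfold angular_speed. apply Rdiv_lt_0_compat; [lra |].
    apply Rmult_lt_0_compat; nra. }
  nra.
Qed.

Lemma orbit_x_at_min : orbit_x t0 = sqrt (orbit_amp2 rho xi E L).
Proof.
  rewrite <- (orbit_xy_norm t0). unfold orbit_y. rewrite Pr_at_min.
  replace ((L * 0 / r t0) ^ 2) with 0 by (field; apply Rgt_not_eq, r_pos).
  rewrite Rplus_0_r. symmetry. apply sqrt_pow2, orbit_x_at_min_nonneg.
Qed.

Lemma orbit_equation t : L ^ 2 / r t ^ 2 = E + sqrt (orbit_amp2 rho xi E L) * cos (2 * phi t).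
Proof.
  rewrite <- orbit_x_at_min. destruct (orbit_xy_rotation t) as [Ex _].
  unfold orbit_x at 1 in Ex. lra.
Qed.

Lemma orbit_momentum t : L * Pr t / r t = sqrt (orbit_amp2 rho xi E L) * sin (2 * phi t).
Proof. rewrite <- orbit_x_at_min. exact (proj2 (orbit_xy_rotation t)). Qed.

Lemma orbit_equation_zero_energy :
  E = 0 -> forall t, L / r t ^ 2 = sqrt (Rabs xi) * cos (2 * phi t).
Proof.
  intros HE0 t. pose proof (orbit_equation t) as Horb. pose proof orbit_amp2_nonneg as HA.
  unfold orbit_amp2 in Horb, HA. rewrite HE0 in Horb, HA.
  assert (0 < L ^ 2) by (apply pow_lt; lra).
  assert (Hxi : xi <= 0) by nra.
  rewrite Rabs_left1 by exact Hxi.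
  replace (0 ^ 2 + L ^ 2 * (2 * rho * 0 - xi)) with (L ^ 2 * - xi) in Horb by ring.
  rewrite sqrt_mult_alt, sqrt_pow2 in Horb by lra.
  apply (Rmult_eq_reg_l L); [| lra].
  replace (L * (L / r t ^ 2)) with (L ^ 2 / r t ^ 2) by (field; pose proof (r_pos t); lra).
  rewrite Horb. ring.
Qed.

Lemma orbit_equation_nonzero_energy : E <> 0 -> forall t,
  L ^ 2 / (Rabs E * r t ^ 2) = sgn E + ecc rho xi E L * cos (2 * phi t).
Proof.
  intros HE0 t. rewrite ecc_eq, sgn_eq by (exact HE0 || exact orbit_amp2_nonneg).
  assert (0 < Rabs E) by (apply Rabs_pos_lt; exact HE0).
  pose proof (r_pos t).
  replace (L ^ 2 / (Rabs E * r t ^ 2)) with (L ^ 2 / r t ^ 2 / Rabs E)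
    by (field; split; [nra | lra]).
  rewrite orbit_equation. field. lra.
Qed.

Section Bounded.

Hypothesis bound : E < xi / (2 * rho).

Lemma orbit_amp_lt_E : sqrt (orbit_amp2 rho xi E L) < E.
Proof.
  pose proof (E_pos_of_bound bound).
  assert (Hlt : sqrt (orbit_amp2 rho xi E L) < sqrt (E ^ 2)).
  { apply sqrt_lt_1_alt. split; [exact orbit_amp2_nonneg |].
    assert (0 < L ^ 2) by (apply pow_lt; lra).
    assert (2 * rho * E < xi)
      by (apply (Rmult_lt_compat_l (2 * rho)) in bound; [field_simplify in bound |]; lra).
    unfold orbit_amp2. nra. }
  rewrite sqrt_pow2 in Hlt by lra. exact Hlt.
Qed.

Lemma orbit_equation_bounded t :
  L ^ 2 / (E * r t ^ 2) = 1 + ecc rho xi E L * cos (2 * phi t).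
Proof.
  pose proof (E_pos_of_bound bound).
  rewrite <- (sgn_pos E), <- (Rabs_right E) at 1 by lra.
  apply orbit_equation_nonzero_energy. lra.
Qed.

Definition inv_r2_of_angle (x : R) : R :=
  (E + sqrt (orbit_amp2 rho xi E L) * cos (2 * x)) / L ^ 2.
Definition angular_speed_of_angle (x : R) : R :=
  L * inv_r2_of_angle x ^ 2 / (inv_r2_of_angle x + rho).

Lemma inv_r2_of_angle_pos x : 0 < inv_r2_of_angle x.
Proof.
  unfold inv_r2_of_angle. pose proof orbit_amp_lt_E. pose proof (COS_bound (2 * x)).
  pose proof (sqrt_pos (orbit_amp2 rho xi E L)). apply Rdiv_lt_0_compat; nra.
Qed.

Lemma inv_r2_of_angle_periodic x : inv_r2_of_angle (x + 2 * PI) = inv_r2_of_angle x.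
Proof.
  unfold inv_r2_of_angle. replace (2 * (x + 2 * PI)) with (2 * x + 2 * INR 2 * PI) by (simpl; ring).
  rewrite cos_period. reflexivity.
Qed.

Lemma inv_r2_of_angle_phi t : inv_r2_of_angle (phi t) = / r t ^ 2.
Proof.
  unfold inv_r2_of_angle. rewrite <- orbit_equation. field. pose proof (r_pos t). split; nra.
Qed.

Lemma angular_speed_phi t : angular_speed t = angular_speed_of_angle (phi t).
Proof.
  unfold angular_speed, angular_speed_of_angle. rewrite inv_r2_of_angle_phi. pose proof (r_pos t).
  field. split; nra.
Qed.

Lemma trajectory_closed : exists T, 0 < T /\ forall t,
  r (t + T) = r t /\ phi (t + T) = phi t + 2 * PI /\ Pr (t + T) = Pr t.
Proof.
  destruct (angle_period_of_periodic_speed angular_speed_of_angle phi (2 * PI)) as [T [HT Hphi]].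
  - pose proof PI_RGT_0. lra.
  - intros x. pose proof (inv_r2_of_angle_pos x). unfold angular_speed_of_angle.
    apply Rdiv_lt_0_compat; [apply Rmult_lt_0_compat; [| apply pow_lt] |]; lra.
  - intros x. apply (ex_derive_continuous (K := R_AbsRing) (V := R_NormedModule)).
    pose proof (inv_r2_of_angle_pos x). unfold angular_speed_of_angle, inv_r2_of_angle. auto_derive.
    change (inv_r2_of_angle x + rho <> 0). lra.
  - intros x. unfold angular_speed_of_angle. rewrite inv_r2_of_angle_periodic. reflexivity.
  - intros t. destruct (hamilton_equations t) as [_ [Dphi _]].
    rewrite <- angular_speed_phi. exact Dphi.
  - exists T. split; [exact HT |]. intros t.
    assert (Hr : r (t + T) = r t).
    { pose proof (inv_r2_of_angle_phi (t + T)) as Hu.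
      rewrite Hphi, inv_r2_of_angle_periodic, inv_r2_of_angle_phi in Hu.
      pose proof (r_pos t). pose proof (r_pos (t + T)).
      assert (r (t + T) ^ 2 = r t ^ 2)
        by (rewrite <- (Rinv_inv (r t ^ 2)), Hu, Rinv_inv; reflexivity).
      nra. }
    split; [exact Hr | split; [apply Hphi |]].
    pose proof (orbit_momentum (t + T)) as Hm. rewrite Hphi, Hr in Hm.
    replace (2 * (phi t + 2 * PI)) with (2 * phi t + 2 * INR 2 * PI) in Hm by (simpl; ring).
    rewrite sin_period, <- orbit_momentum in Hm.
    pose proof (r_pos t).
    apply (Rmult_eq_reg_l (L / r t)); [| apply Rgt_not_eq, Rdiv_lt_0_compat; lra].
    unfold Rdiv in *. lra.
Qed.

End Bounded.

End Pericenter.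

End Trajectory.

End CentralOrbits.
Import CentralOrbits.

Theorem proposition10 (rho xi E L : R) (r phi Pr Pphi : R -> R) :
  0 < rho -> 0 < L ->
  hamiltonian_trajectory (H0 rho xi) r phi Pr Pphi ->
  (forall t, H0 rho xi (r t) (phi t) (Pr t) (Pphi t) = E) ->
  (forall t, Pphi t = L) ->
  (* phi normalized: phi = 0 at a point where r is minimal *)
  (exists t0, phi t0 = 0 /\ forall t, r t0 <= r t) ->
  (* (a) *)
  (xi / (2 * rho) <= E ->
     (E = 0 -> forall t, L / r t ^ 2 = sqrt (Rabs xi) * cos (2 * phi t)) /\
     (E <> 0 -> forall t,
        L ^ 2 / (Rabs E * r t ^ 2) = sgn E + ecc rho xi E L * cos (2 * phi t)))
  /\
  (* (b) *)
  (0 <= rho ^ 2 + xi / L ^ 2 -> Eplus rho xi L < E < xi / (2 * rho) ->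
     (forall t, L ^ 2 / (E * r t ^ 2) = 1 + ecc rho xi E L * cos (2 * phi t)) /\
     (* the trajectory is closed (periodic) *)
     (exists T, 0 < T /\ forall t,
        r (t + T) = r t /\ phi (t + T) = phi t + 2 * PI /\ Pr (t + T) = Pr t)).
Proof.
  intros Hrho HL Htraj HE HP [t0 [Hphi0 Hmin]].
  split.
  - intros _. split.
    + apply (orbit_equation_zero_energy rho xi E L r phi Pr Pphi) with t0; assumption.
    + apply (orbit_equation_nonzero_energy rho xi E L r phi Pr Pphi) with t0; assumption.
  - intros _ [_ Hlt]. split.
    + apply (orbit_equation_bounded rho xi E L r phi Pr Pphi) with t0; assumption.
    + apply (trajectory_closed rho xi E L r phi Pr Pphi) with t0; assumption.
Qed.
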